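(* Let $e$ be a series-rational expression. One can obtain a fork-acyclic and finite pomset automaton $A$ with a state $q$ such that $L_A(q)=[\![e]\!]$.
   Context: Fix a finite alphabet $\Sigma$. Pomsets are isomorphism classes of finite labelled posets over $\Sigma$; $1$ is the empty pomset; sequential composition $U\cdot V$ is the disjoint union with all elements of $U$ below all elements of $V$; parallel composition $U\parallel V$ is the disjoint union of orders. $\mathsf{SP}(\Sigma)$ is the smallest set containing $1$ and the one-element pomsets $a\in\Sigma$ closed under $\cdot,\parallel$. These lift pointwise to sets of pomsets, and $L^*=\bigcup_n L^n$ with $L^0=\{1\}$, $L^{n+1}=L\cdot L^n$. Series-rational expressions are generated by $e,f::=0\mid 1\mid a\in\Sigma\mid e+f\mid e\cdot f\mid e\parallel f\mid e^*$, with semantics $[\![0]\!]=\emptyset$, $[\![1]\!]=\{1\}$, $[\![a]\!]=\{a\}$, $[\![e+f]\!]=[\![e]\!]\cup[\![f]\!]$, $[\![e\cdot f]\!]=[\![e]\!]\cdot[\![f]\!]$, $[\![e\parallel f]\!]=[\![e]\!]\parallel[\![f]\!]$, $[\![e^*]\!]=[\![e]\!]^*$. A pomset automaton is $A=\langle Q,F,\delta,\gamma\rangle$ with $F\subseteq Q$, $\delta:Q\times\Sigma\to2^Q$, $\gamma:Q\times\mathbb{M}(Q)\to2^Q$ ($\mathbb{M}(Q)$ finite multisets over $Q$), each $q$ having finitely many $\phi$ with $\gamma(q,\phi)\ne\emptyset$; it is finite if $Q$ is finite. The run relation $\to_A$ is the smallest relation with: $q\xrightarrow{1}_A q$; $q\xrightarrow{a}_A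 q'$ if $q'\in\delta(q,a)$; $q\xrightarrow{U\cdot V}_A q'$ if $q\xrightarrow{U}_A q''\xrightarrow{V}_A q'$; $q\xrightarrow{U_1\parallel\cdots\parallel U_n}_A q'$ if $q'\in\gamma(q,\{\!|q_1,\dots,q_n|\!\})$ and each $q_i\xrightarrow{U_i}_A q_i'$ for some $q_i'\in F$. $L_A(q)=\{U\mid\exists q'\in F.\ q\xrightarrow{U}_A q'\}$. The support relation $\preceq_A$ is the smallest preorder with $q'\preceq_A q$ whenever $q'\in\delta(q,a)$, or $q'\in\gamma(q,\phi)$, or $q'\in\phi$ with $\gamma(q,\phi)\ne\emptyset$; $A$ is fork-acyclic if $r\in\phi$ and $\gamma(q,\phi)\ne\emptyset$ imply $q\not\preceq_A r$. *)

From HB Require Import structures.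
From mathcomp Require Import all_boot.
From mathcomp Require Import finmap multiset.
From Stdlib Require Import Relations.
Set Implicit Arguments. Unset Strict Implicit. Unset Printing Implicit Defensive.
Local Open Scope fset_scope.
Local Open Scope mset_scope.

Section Pomsets.
Variable Sigma : finType.

(* A finite labelled relational structure on {0,..,n-1}; a labelled poset
   when [is_lposet] holds.  Pomsets are such structures up to [liso]. *)
Record lpo := Lpo { lsize : nat; lle : rel 'I_lsize; llab : 'I_lsize -> Sigma }.
Arguments lle : clear implicits.
Arguments llab : clear implicits.

Definition is_lposet (U : lpo) : Prop :=
  [/\ forall x, lle U x x,
      forall x y, lle U x y -> lle U y x -> x = y
    & forall x y z, lle U x y -> lle U y z -> lle U x z].

Definition liso (U V : lpo) : Prop :=
  exists f : 'I_(lsize U) -> 'I_(lsize V),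
    [/\ bijective f,
        forall x y, lle U x y = lle V (f x) (f y)
      & forall x, llab V (f x) = llab U x].

Definition lempty : lpo := @Lpo 0 (fun _ _ => true) (fun x => match x with Ordinal _ h => False_rect _ (notF h) end).

Definition latom (a : Sigma) : lpo := @Lpo 1 (fun _ _ => true) (fun _ => a).

Definition lseq (U V : lpo) : lpo :=
  @Lpo (lsize U + lsize V)
    (fun x y => match split x, split y with
                | inl a, inl b => lle U a b
                | inr a, inr b => lle V a b
                | inl _, inr _ => true
                | inr _, inl _ => false end)
    (fun x => match split x with inl a => llab U a | inr b => llab V b end).

Definition lpar (U V : lpo) : lpo :=
  @Lpo (lsize U + lsize V)
    (fun x y => match split x, split y with
                | inl a, inl b => lle U a b
                | inr a, inr b => lle V a b
                | _, _ => false end)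
    (fun x => match split x with inl a => llab U a | inr b => llab V b end).

Fixpoint lparl (Us : seq lpo) : lpo :=
  match Us with [::] => lempty | U :: Us' => lpar U (lparl Us') end.

Definition lang := lpo -> Prop.

Definition lang_seq (L M : lang) : lang :=
  fun W => exists U V, [/\ L U, M V & liso W (lseq U V)].
Definition lang_par (L M : lang) : lang :=
  fun W => exists U V, [/\ L U, M V & liso W (lpar U V)].
Definition lang_one : lang := fun W => liso W lempty.
Fixpoint lang_pow (L : lang) (n : nat) : lang :=
  match n with 0 => lang_one | n'.+1 => lang_seq L (lang_pow L n') end.
Definition lang_star (L : lang) : lang := fun W => exists n, lang_pow L n W.

Inductive srexpr : Type :=
  | sr0 | sr1 | srlit of Sigma
  | srplus of srexpr & srexpr
  | srseq of srexpr & srexpr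
  | srpar of srexpr & srexpr
  | srstar of srexpr.

Fixpoint sem (e : srexpr) : lang :=
  match e with
  | sr0 => fun _ => False
  | sr1 => lang_one
  | srlit a => fun W => liso W (latom a)
  | srplus e f => fun W => sem e W \/ sem f W
  | srseq e f => lang_seq (sem e) (sem f)
  | srpar e f => lang_par (sem e) (sem f)
  | srstar e => lang_star (sem e)
  end.

Record pa (Q : choiceType) := PA {
  pa_final : Q -> Prop;
  pa_delta : Q -> Sigma -> Q -> Prop;
  pa_gamma : Q -> {mset Q}%mset -> Q -> Prop;
  pa_gamma_fin : forall q, exists s : seq {mset Q}%mset,
      forall phi, (exists q', pa_gamma q phi q') -> phi \in s
}.

Section Runs.
Variables (Q : choiceType) (A : pa Q).

Inductive run : Q -> lpo -> Q -> Prop :=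
  | run_one q W : liso W lempty -> run q W q
  | run_atom q a q' W : pa_delta A q a q' -> liso W (latom a) -> run q W q'
  | run_seq q q'' q' U V W :
      run q U q'' -> run q'' V q' -> liso W (lseq U V) -> run q W q'
  | run_par q q' (qs qfs : seq Q) (Us : seq lpo) W :
      size Us = size qs -> size qfs = size qs ->
      (forall qf, qf \in qfs -> pa_final A qf) ->
      (forall i, i < size qs -> run (nth q qs i) (nth lempty Us i) (nth q qfs i)) ->
      pa_gamma A q (seq_mset qs) q' ->
      liso W (lparl Us) -> run q W q'.

Definition pa_lang (q : Q) : lang :=
  fun U => exists q', pa_final A q' /\ run q U q'.

Definition support_step (q' q : Q) : Prop :=
  (exists a, pa_delta A q a q') \/
  (exists phi, pa_gamma A q phi q') \/
  (exists phi, q' \in phi /\ exists q'', pa_gamma A q phi q'').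

Definition support (q' q : Q) : Prop := clos_refl_trans Q support_step q' q.

Definition fork_acyclic : Prop :=
  forall q phi r, r \in phi -> (exists q'', pa_gamma A q phi q'') -> ~ support q r.

End Runs.
End Pomsets.

From mathcomp Require Import all_boot.
From mathcomp Require Import finmap multiset.
From Stdlib Require List.
Set Implicit Arguments. Unset Strict Implicit. Unset Printing Implicit Defensive.

(* A Thompson-style construction.  Every subterm occurrence x of e gets a
   block of three states: entry, middle and exit.  A letter is a single
   δ-step from entry to exit; x + y, x · y and x ∥ y fork from their entry into
   the entry states of their direct subterms (one fork per summand, two
   successive forks through the middle state, one fork with two callees), and
   x* loops at its entry with a fork calling x.  Targets of δ and γ stay in
   the block of their source and forks only call blocks of strictly smaller
   subterms, so the size of the subterm never increases along the support
   relation and drops strictly from a fork to its callees: the automaton is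
   fork-acyclic.  A run between two positions of the block of x reads exactly
   the pomsets of [between x i j] (induction on runs); conversely every pomset
   of x is accepted from the entry of any block of x (induction on x). *)

Lemma In_nth T (x0 : T) s y : List.In y s -> exists i : 'I_(size s), nth x0 s i = y.
Proof.
elim: s => [|x s IHs] //= [->|/IHs [i <-]]; first by exists ord0.
by exists (lift ord0 i).
Qed.

Lemma nth_In T (x0 : T) s (i : 'I_(size s)) : List.In (nth x0 s i) s.
Proof.
case: i => i /=; elim: s i => [|x s IHs] [|i] //=; first by left.
by move=> lt_i_s; right; apply: IHs.
Qed.

Lemma perm_eq2 (T : eqType) (s : seq T) x y :
  perm_eq s [:: x; y] -> s = [:: x; y] \/ s = [:: y; x].
Proof.
case/perm_consP=> i [u [rot_s /perm_small_eq u_y]]; rewrite {}u_y // in rot_s.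
have := congr1 size rot_s; rewrite size_rot.
case: s rot_s => [|a [|b [|//]]] // + _.
case: i => [|[|i]]; rewrite ?rot0 ?(rot_oversize (_ : 2 <= i.+2)) //= => -[-> ->];
  by [left|right].
Qed.

Lemma in_seq_mset (T : choiceType) (s : seq T) x : (x \in seq_mset s) = (x \in s).
Proof. exact: perm_mem (perm_eq_seq_mset s) x. Qed.

Section Isomorphism.
Variable Sigma : finType.
Notation lpo := (lpo Sigma).

Lemma liso_intro (U V : lpo) (f : 'I_(lsize U) -> 'I_(lsize V)) g :
  cancel f g -> cancel g f -> (forall x y, lle x y = lle (f x) (f y)) ->
  (forall x, llab (f x) = llab x) -> liso U V.
Proof. by move=> fK gK f_le f_lab; exists f; split => //; exists g. Qed.

Lemma liso_refl (U : lpo) : liso U U.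
Proof. exact: (@liso_intro U U id id). Qed.

Lemma liso_sym (U V : lpo) : liso U V -> liso V U.
Proof.
case=> f [[g fK gK] f_le f_lab]; apply: (liso_intro gK fK).
  by move=> x y; rewrite f_le !gK.
by move=> x; rewrite -f_lab gK.
Qed.

Lemma liso_trans (U V W : lpo) : liso U V -> liso V W -> liso U W.
Proof.
case=> f [[g fK gK] f_le f_lab] [f' [[g' fK' gK'] f_le' f_lab']].
apply: (@liso_intro U W (f' \o f) (g \o g')) => [x|x|x y|x] /=.
- by rewrite fK' fK.
- by rewrite gK gK'.
- by rewrite f_le f_le'.
- by rewrite f_lab' f_lab.
Qed.

(* [lseq U V] and [lpar U V] are convertible to [lsum true false U V] and
   [lsum false false U V], so the lemmas below serve both. *)
Definition lsum (lr rl : bool) (U V : lpo) : lpo :=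
  @Lpo Sigma (lsize U + lsize V)
    (fun x y => match split x, split y with
                | inl a, inl b => lle a b
                | inr a, inr b => lle a b
                | inl _, inr _ => lr
                | inr _, inl _ => rl end)
    (fun x => match split x with inl a => llab a | inr b => llab b end).

Definition sum_map m n m' n' (f : 'I_m -> 'I_m') (g : 'I_n -> 'I_n')
    (x : 'I_(m + n)) : 'I_(m' + n') :=
  unsplit (match split x with inl a => inl (f a) | inr b => inr (g b) end).

Lemma split_sum_map m n m' n' (f : 'I_m -> 'I_m') (g : 'I_n -> 'I_n') x :
  split (sum_map f g x) =
  match split x with inl a => inl (f a) | inr b => inr (g b) end.
Proof. exact: unsplitK. Qed.

Lemma sum_mapK m n m' n' (f : 'I_m -> 'I_m') f' (g : 'I_n -> 'I_n') g' :
  cancel f f' -> cancel g g' -> cancel (sum_map f g) (sum_map f' g').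
Proof.
move=> fK gK x; rewrite /sum_map unsplitK -[RHS]splitK.
by case: (split x) => a; rewrite ?fK ?gK.
Qed.

Lemma lsum_congr lr rl (U U' V V' : lpo) :
  liso U U' -> liso V V' -> liso (lsum lr rl U V) (lsum lr rl U' V').
Proof.
case=> f [[f' fK f'K] f_le f_lab] [g [[g' gK g'K] g_le g_lab]].
apply: (@liso_intro (lsum lr rl U V) (lsum lr rl U' V') _ _
         (sum_mapK fK gK) (sum_mapK f'K g'K)) => [x y|x] /=;
  rewrite !split_sum_map.
  by case: (split x) => a; case: (split y) => b.
by case: (split x) => a.
Qed.

Lemma lsum_swap lr rl (U V : lpo) : liso (lsum lr rl U V) (lsum rl lr V U).
Proof.
pose swap m n (x : 'I_(m + n)) : 'I_(n + m) :=
  unsplit (match split x with inl a => inr a | inr b => inl b end).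
have swapK m n : cancel (@swap m n) (@swap n m).
  by move=> x; rewrite /swap unsplitK -[RHS]splitK; case: (split x).
apply: (@liso_intro (lsum lr rl U V) (lsum rl lr V U) _ _ (swapK _ _) (swapK _ _))
  => [x y|x] /=; rewrite !unsplitK.
  by case: (split x) => a; case: (split y) => b.
by case: (split x) => a.
Qed.

Lemma lsum_unitr lr rl (U : lpo) : liso (lsum lr rl U (lempty Sigma)) U.
Proof.
have splitl (x : 'I_(lsize U + 0)) : split x = inl (cast_ord (addn0 _) x).
  by apply: (can_inj (@unsplitK _ _)); rewrite splitK; apply: val_inj.
apply: (@liso_intro (lsum lr rl U (lempty Sigma)) U (cast_ord (addn0 _))
         (cast_ord (esym (addn0 _)))) => [x|x|x y|x] /=;
  by rewrite ?cast_ordK ?cast_ordKV ?splitl.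
Qed.

Lemma lsum_unitl lr rl (V : lpo) : liso (lsum lr rl (lempty Sigma) V) V.
Proof. exact: liso_trans (lsum_swap _ _ _ _) (lsum_unitr _ _ _). Qed.

Lemma split_lshift m n (a : 'I_m) : split (lshift n a) = inl a.
Proof. exact: (unsplitK (inl a)). Qed.

Lemma split_rshift m n (b : 'I_n) : split (rshift m b) = inr b.
Proof. exact: (unsplitK (inr b)). Qed.

Lemma lsum_assoc lr rl (U V W : lpo) :
  liso (lsum lr rl (lsum lr rl U V) W) (lsum lr rl U (lsum lr rl V W)).
Proof.
pose F (x : 'I_(lsize U + lsize V + lsize W)) : 'I_(lsize U + (lsize V + lsize W)) :=
  match split x with
  | inl y => match split y with inl u => lshift _ u
             | inr v => rshift _ (lshift _ v) end
  | inr w => rshift _ (rshift _ w) end.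
pose G (x : 'I_(lsize U + (lsize V + lsize W))) : 'I_(lsize U + lsize V + lsize W) :=
  match split x with
  | inl u => lshift _ (lshift _ u)
  | inr y => match split y with inl v => lshift _ (rshift _ v)
             | inr w => rshift _ w end end.
apply: (@liso_intro (lsum lr rl (lsum lr rl U V) W) (lsum lr rl U (lsum lr rl V W)) F G)
  => [x|x|x y|x] /=.
- rewrite -[RHS]splitK /F /G; case: (split x) => [y|w]; rewrite ?split_rshift //.
  rewrite -[y in RHS]splitK.
  by case: (split y) => a; rewrite ?(split_lshift, split_rshift).
- rewrite -[RHS]splitK /F /G; case: (split x) => [u|y]; rewrite ?split_lshift //.
  rewrite -[y in RHS]splitK.
  by case: (split y) => a; rewrite ?(split_lshift, split_rshift).
- rewrite /F; case: (split x) => [x1|x1]; [case: (split x1) => x2|];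
  case: (split y) => [y1|y1]; try case: (split y1) => y2;
  by rewrite ?(split_lshift, split_rshift).
- rewrite /F; case: (split x) => [x1|x1]; [case: (split x1) => x2|];
  by rewrite ?(split_lshift, split_rshift).
Qed.

Lemma lseq_congr (U U' V V' : lpo) :
  liso U U' -> liso V V' -> liso (lseq U V) (lseq U' V').
Proof. exact: lsum_congr. Qed.

Lemma lpar_congr (U U' V V' : lpo) :
  liso U U' -> liso V V' -> liso (lpar U V) (lpar U' V').
Proof. exact: lsum_congr. Qed.

Lemma lparl1 (U : lpo) : liso (lparl [:: U]) U.
Proof. exact: lsum_unitr. Qed.

Lemma lparl2 (U V : lpo) : liso (lparl [:: U; V]) (lpar U V).
Proof. exact: lpar_congr (liso_refl U) (lparl1 V). Qed.

End Isomorphism.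

Section Semantics.
Variable Sigma : finType.
Notation lpo := (lpo Sigma).
Notation srexpr := (srexpr Sigma).

Lemma lang_pow_iso (L : lang Sigma) n (U W : lpo) :
  liso W U -> lang_pow L n U -> lang_pow L n W.
Proof.
case: n => [|n] /= WU; first exact: liso_trans.
by case=> X [Y [LX LY UXY]]; exists X, Y; split => //; apply: liso_trans UXY.
Qed.

Lemma sem_iso (x : srexpr) (U W : lpo) : liso W U -> sem x U -> sem x W.
Proof.
elim: x U W => [| |a|x IHx y IHy|x IHx y IHy|x IHx y IHy|x IHx] U W WU //=.
1, 2: exact: liso_trans.
- by case=> [/(IHx _ _ WU)|/(IHy _ _ WU)]; [left|right].
- by case=> X [Y [? ? UXY]]; exists X, Y; split => //; apply: liso_trans UXY.
- by case=> X [Y [? ? UXY]]; exists X, Y; split => //; apply: liso_trans UXY.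
- by case=> n; exists n; apply: lang_pow_iso WU _.
Qed.

Lemma lang_powD (L : lang Sigma) m n (U V W : lpo) :
  lang_pow L m U -> lang_pow L n V -> liso W (lseq U V) -> lang_pow L (m + n) W.
Proof.
elim: m U V W => [|m IHm] U V W /=.
  move=> U1 LV WUV; apply: lang_pow_iso LV.
  exact: liso_trans WUV (liso_trans (lseq_congr U1 (liso_refl V)) (lsum_unitl _ _ V)).
case=> X [Y [LX LY UXY]] LV WUV; exists X, (lseq Y V); split => //.
  exact: IHm LY LV (liso_refl _).
exact: liso_trans WUV (liso_trans (lseq_congr UXY (liso_refl V)) (lsum_assoc _ _ X Y V)).
Qed.

Lemma sem_seq1l (y : srexpr) (U V W : lpo) :
  sem (sr1 Sigma) U -> sem y V -> liso W (lseq U V) -> sem y W.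
Proof.
move=> /= U1 yV WUV; apply: sem_iso yV.
exact: liso_trans WUV (liso_trans (lseq_congr U1 (liso_refl V)) (lsum_unitl _ _ V)).
Qed.

Lemma sem_seq1r (y : srexpr) (U V W : lpo) :
  sem y U -> sem (sr1 Sigma) V -> liso W (lseq U V) -> sem y W.
Proof.
move=> yU /= V1 WUV; apply: sem_iso yU.
exact: liso_trans WUV (liso_trans (lseq_congr (liso_refl U) V1) (lsum_unitr _ _ U)).
Qed.

Lemma sem_star_seq (x : srexpr) (U V W : lpo) :
  sem (srstar x) U -> sem (srstar x) V -> liso W (lseq U V) -> sem (srstar x) W.
Proof. by move=> [m xU] [n xV] WUV; exists (m + n); apply: lang_powD xU xV WUV. Qed.

(* [between x i j] denotes the pomsets read from position [i] to position [j]
   of the block of states that implements [x]: [0] is the entry, [2] the exit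
   and [1] the point between the two factors of a sequential composition; the
   blocks of [1] and of a star exit at their entry. *)
Definition between (x : srexpr) (i j : nat) : srexpr :=
  match x, i, j with
  | srstar _, 0, 0 => x
  | _, _, _ =>
    if i == j then sr1 Sigma else
    match x, i, j with
    | srlit _, 0, 2 | srplus _ _, 0, 2 | srpar _ _, 0, 2 | srseq _ _, 0, 2 => x
    | srseq y _, 0, 1 => y
    | srseq _ z, 1, 2 => z
    | _, _, _ => sr0 Sigma
    end
  end.

Lemma between_refl x i (W : lpo) : sem (sr1 Sigma) W -> sem (between x i i) W.
Proof. by case: x => *; case: i => [|i] //=; rewrite ?eqxx //; exists 0. Qed.

Lemma between_seq x i j k (U V W : lpo) : i < 3 -> j < 3 -> k < 3 ->
  sem (between x i j) U -> sem (between x j k) V -> liso W (lseq U V) ->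
  sem (between x i k) W.
Proof.
(* In each case a hypothesis is empty, or the claim is a unit law, the closure
   of a star under concatenation, or the definition of [srseq]. *)
case: i => [|[|[|i]]] //; case: j => [|[|[|j]]] //; case: k => [|[|[|k]]] // _ _ _;
case: x => [| |?|? ?|? ?|? ?|?]; cbn -[sem];
first [ by case | by move=> ? []
      | exact: sem_seq1l | exact: sem_seq1r | exact: sem_star_seq
      | by move=> xU yV WUV; exists U, V ].
Qed.

End Semantics.

Section Subterms.
Variable Sigma : finType.
Notation srexpr := (srexpr Sigma).

Fixpoint subterms (x : srexpr) : seq srexpr :=
  x :: match x with
       | srplus y z | srseq y z | srpar y z => subterms y ++ subterms z
       | srstar y => subterms y
       | _ => [::] end.

Fixpoint esize (x : srexpr) : nat :=
  match x with
  | srplus y z | srseq y z | srpar y z => (esize y + esize z).+1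
  | srstar y => (esize y).+1
  | _ => 0 end.

Definition is_child (y x : srexpr) : Prop :=
  match x with
  | srplus z1 z2 | srseq z1 z2 | srpar z1 z2 => y = z1 \/ y = z2
  | srstar z => y = z
  | _ => False end.

Lemma esize_child x y : is_child y x -> esize y < esize x.
Proof.
case: x => //= [z1 z2|z1 z2|z1 z2|z] => [[]|[]|[]|] -> //;
  by rewrite ltnS ?leq_addr ?leq_addl.
Qed.

Lemma subterms_refl x : List.In x (subterms x).
Proof. by case: x => *; left. Qed.

Lemma subterms_child x y : is_child y x -> List.In y (subterms x).
Proof.
case: x => //= [z1 z2|z1 z2|z1 z2|z] => [[]|[]|[]|] ->; right;
  rewrite ?List.in_app_iff; [left|right|left|right|left|right|];
  exact: subterms_refl.
Qed.

Lemma subterms_trans x y z :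
  List.In y (subterms x) -> List.In z (subterms y) -> List.In z (subterms x).
Proof.
elim: x => [| |a|x1 IH1 x2 IH2|x1 IH1 x2 IH2|x1 IH1 x2 IH2|x1 IH1] /=;
  try by case=> // <-.
all: case=> [<- //|yx zy]; right; rewrite ?List.in_app_iff in yx *.
all: try case: yx => yx;
  by [left; apply: IH1 yx zy|right; apply: IH2 yx zy|apply: IH1 yx zy].
Qed.

End Subterms.

Section Construction.
Variable Sigma : finType.
Variable e : srexpr Sigma.
Notation lpo := (lpo Sigma).
Notation srexpr := (srexpr Sigma).

Definition state : finType := ('I_(size (subterms e)) * 'I_3)%type.

Definition expr (q : state) : srexpr := nth (sr0 Sigma) (subterms e) q.1.
Definition pos (q : state) : nat := q.2.

Lemma expr_block (q q' : state) : q'.1 = q.1 -> expr q' = expr q.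
Proof. by rewrite /expr => ->. Qed.

Lemma entry_child (q : state) y :
  is_child y (expr q) -> exists c : state, expr c = y /\ pos c = 0.
Proof.
move=> /subterms_child yq.
have [i <-] := In_nth (sr0 Sigma) (subterms_trans (nth_In (sr0 Sigma) q.1) yq).
by exists (i, ord0).
Qed.

Definition final (q : state) : Prop :=
  match expr q with
  | sr0 => False
  | sr1 | srstar _ => pos q = 0
  | _ => pos q = 2 end.

Definition delta (q : state) (a : Sigma) (q' : state) : Prop :=
  [/\ q'.1 = q.1, expr q = srlit a, pos q = 0 & pos q' = 2].

Definition gamma (q : state) (phi : {mset state}%mset) (q' : state) : Prop :=
  q'.1 = q.1 /\ exists c : state, pos c = 0 /\
  match expr q with
  | srplus y z =>
      [/\ expr c = y \/ expr c = z, phi = seq_mset [:: c], pos q = 0 & pos q' = 2]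
  | srseq y z => phi = seq_mset [:: c] /\
      ([/\ expr c = y, pos q = 0 & pos q' = 1] \/ [/\ expr c = z, pos q = 1 & pos q' = 2])
  | srpar y z => exists d : state, [/\ pos d = 0, expr c = y, expr d = z,
      phi = seq_mset [:: c; d] & pos q = 0 /\ pos q' = 2]
  | srstar y => [/\ expr c = y, phi = seq_mset [:: c], pos q = 0 & pos q' = 0]
  | _ => False end.

Lemma gamma_shape q phi q' : gamma q phi q' ->
  (exists c, phi = seq_mset [:: c]) \/ (exists c d, phi = seq_mset [:: c; d]).
Proof.
case=> _ [c [_]]; case: (expr q) => // [y z [_ ->]|y z [->]|y z [d [_ _ _ ->]]|y [_ ->]];
  by [left; exists c|right; exists c, d].
Qed.

Lemma gamma_fin q : exists s : seq {mset state}%mset,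
  forall phi, (exists q', gamma q phi q') -> phi \in s.
Proof.
exists ([seq seq_mset [:: c] | c <- enum state] ++
        [seq seq_mset [:: c; d] | c <- enum state, d <- enum state]).
move=> phi [q' /gamma_shape [[c ->]|[c [d ->]]]]; rewrite mem_cat; apply/orP.
  by left; apply: map_f; rewrite mem_enum.
by right; apply: (allpairs_f (fun c d => seq_mset [:: c; d])); rewrite mem_enum.
Qed.

Definition aut : pa Sigma state := PA final delta gamma_fin.

Lemma gamma_callee q phi q' r : gamma q phi q' -> r \in phi ->
  pos r = 0 /\ is_child (expr r) (expr q).
Proof.
case=> _ [c [c0]]; case: (expr q) => //.
- by move=> y z [cyz -> _ _]; rewrite in_seq_mset inE => /eqP ->.
- move=> y z [-> cyz]; rewrite in_seq_mset inE => /eqP ->.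
  by case: cyz => [[cy _ _]|[cz _ _]]; [split; [|left]|split; [|right]].
- move=> y z [d [d0 cy dz -> _]]; rewrite in_seq_mset !inE.
  by case/orP => /eqP ->; [split; [|left]|split; [|right]].
- by move=> y [cy -> _ _]; rewrite in_seq_mset inE => /eqP ->.
Qed.

Lemma support_step_esize (q' q : state) :
  support_step aut q' q -> esize (expr q') <= esize (expr q).
Proof.
case=> [[a [/expr_block -> _ _ _]]|[[phi [/expr_block -> _]]|[phi [r_phi [q'' g]]]]] //.
by have [_ /esize_child/ltnW] := gamma_callee g r_phi.
Qed.

Lemma aut_fork_acyclic : fork_acyclic aut.
Proof.
move=> q phi r r_phi [q'' g] qr.
have : esize (expr q) <= esize (expr r).
  elim: qr => [x y /support_step_esize //|x //|x y z _ le_xy _ le_yz].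
  exact: leq_trans le_xy le_yz.
by have [_ /esize_child] := gamma_callee g r_phi; rewrite ltnNge => /negP.
Qed.

Lemma final_sem (q : state) (W : lpo) :
  final q -> sem (between (expr q) 0 (pos q)) W -> sem (expr q) W.
Proof. by rewrite /final; case: (expr q) => [| |?|? ?|? ?|? ?|?] //= ->. Qed.

Lemma fork_sound q q' qs (Us : seq lpo) W :
  gamma q (seq_mset qs) q' -> size Us = size qs ->
  (forall i, i < size qs -> sem (expr (nth q qs i)) (nth (lempty Sigma) Us i)) ->
  liso W (lparl Us) -> sem (between (expr q) (pos q) (pos q')) W.
Proof.
case=> _ [c [_ g]] sizeUs callees WUs.
have call1 : seq_mset qs = seq_mset [:: c] -> sem (expr c) W.
  move/eq_seq_msetP/perm_small_eq => qs_c; rewrite {}qs_c // in sizeUs callees.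
  case: Us sizeUs WUs callees => [|U [|//]] // _ WU /(_ 0 isT) /=.
  exact: sem_iso (liso_trans WU (lparl1 U)).
case: (expr q) g => //.
- move=> y z [cyz /call1 cW -> ->] /=.
  by case: cyz cW => <-; [left|right].
- by move=> y z [/call1 cW [[<- -> ->]|[<- -> ->]]].
- move=> y z [d [_ <- <- /eq_seq_msetP/perm_eq2 qs_cd [-> ->]]] /=.
  case: qs_cd => ?; subst qs;
    case: Us sizeUs WUs callees => [|U [|V [|//]]] // _ WUV callees;
    have /= cU := callees 0 isT; have /= dV := callees 1 isT.
    by exists U, V; split => //; apply: liso_trans WUV (lparl2 U V).
  exists V, U; split => //.
  exact: liso_trans WUV (liso_trans (lparl2 U V) (lsum_swap _ _ U V)).
- move=> y [<- /call1 cW -> ->] /=.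
  exists 1, W, (lempty Sigma); split => //; first exact: liso_refl.
  exact: liso_sym (lsum_unitr _ _ W).
Qed.

Lemma run_sound q W q' : run aut q W q' ->
  q'.1 = q.1 /\ sem (between (expr q) (pos q) (pos q')) W.
Proof.
elim=> {q W q'}.
- by move=> q W W1; split => //; apply: between_refl.
- by move=> q a q' W [? -> -> ->].
- move=> q q'' q' U V W _ [qq'' qU] _ [q''q' q''V] WUV.
  split; first by rewrite q''q'.
  rewrite (expr_block qq'') in q''V.
  exact: between_seq (ltn_ord q.2) (ltn_ord q''.2) (ltn_ord q'.2) qU q''V WUV.
move=> q q' qs qfs Us W sizeUs sizeqfs qfs_final _ callees g WUs.
split; first by case: g.
have entries r : r \in qs -> pos r = 0.
  by rewrite -in_seq_mset => /(gamma_callee g) [].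
apply: fork_sound g sizeUs _ WUs => i lt_i.
have [/expr_block qf_c cU] := callees i lt_i.
rewrite -qf_c; apply: final_sem; last by rewrite qf_c -(entries _ (mem_nth q lt_i)).
by apply: qfs_final; rewrite mem_nth // sizeqfs.
Qed.

Lemma run_fork1 q c qf q' (U W : lpo) : gamma q (seq_mset [:: c]) q' ->
  final qf -> run aut c U qf -> liso W U -> run aut q W q'.
Proof.
move=> g qf_final cU WU.
apply: (@run_par _ _ aut q q' [:: c] [:: qf] [:: U]) => //.
- by move=> r; rewrite inE => /eqP ->.
- by case.
- exact: liso_trans WU (liso_sym (lparl1 U)).
Qed.

Lemma run_fork2 q c d qf qf' q' (U V W : lpo) : gamma q (seq_mset [:: c; d]) q' ->
  final qf -> final qf' -> run aut c U qf -> run aut d V qf' ->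
  liso W (lpar U V) -> run aut q W q'.
Proof.
move=> g qf_final qf'_final cU dV WUV.
apply: (@run_par _ _ aut q q' [:: c; d] [:: qf; qf'] [:: U; V]) => //.
- by move=> r; rewrite !inE => /orP[] /eqP ->.
- by case=> [|[]].
- exact: liso_trans WUV (liso_sym (lparl2 U V)).
Qed.

Definition middle (q : state) : state := (q.1, @Ordinal 3 1 isT).
Definition exit (q : state) : state := (q.1, @Ordinal 3 2 isT).

Lemma expr_middle q : expr (middle q) = expr q. Proof. by []. Qed.
Lemma expr_exit q : expr (exit q) = expr q. Proof. by []. Qed.

Definition entry_complete (x : srexpr) : Prop :=
  forall U, sem x U -> forall q, expr q = x -> pos q = 0 -> pa_lang aut q U.

Lemma entry_complete_one : entry_complete (sr1 Sigma).
Proof. by move=> U U1 q qx q0; exists q; split; [rewrite /= /final qx|apply: run_one]. Qed.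

Lemma entry_complete_lit a : entry_complete (srlit a).
Proof.
move=> U Ua q qx q0; exists (exit q); split; first by rewrite /= /final expr_exit qx.
exact: (@run_atom _ _ aut q a).
Qed.

Lemma entry_complete_plus y z :
  entry_complete y -> entry_complete z -> entry_complete (srplus y z).
Proof.
move=> IHy IHz U yzU q qx q0.
exists (exit q); split; first by rewrite /= /final expr_exit qx.
have /entry_child[c [cy c0]] : is_child y (expr q) by rewrite qx; left.
have /entry_child[d [dz d0]] : is_child z (expr q) by rewrite qx; right.
have call r : pos r = 0 -> expr r = y \/ expr r = z ->
    gamma q (seq_mset [:: r]) (exit q).
  by move=> r0 ryz; split => //; exists r; split => //; rewrite qx.
case: yzU => [/IHy /(_ c cy c0)|/IHz /(_ d dz d0)] [qf [qf_final run_U]];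
  apply: run_fork1 qf_final run_U (liso_refl U); apply: call => //; by [left|right].
Qed.

Lemma entry_complete_seq y z :
  entry_complete y -> entry_complete z -> entry_complete (srseq y z).
Proof.
move=> IHy IHz W [U [V [yU zV WUV]]] q qx q0.
have /entry_child[c [cy c0]] : is_child y (expr q) by rewrite qx; left.
have /entry_child[d [dz d0]] : is_child z (expr q) by rewrite qx; right.
have [qf [qf_final cU]] := IHy U yU c cy c0.
have [qf' [qf'_final dV]] := IHz V zV d dz d0.
exists (exit q); split; first by rewrite /= /final expr_exit qx.
apply: (@run_seq _ _ aut q (middle q) _ U V W _ _ WUV).
  apply: run_fork1 qf_final cU (liso_refl U).
  by split => //; exists c; split => //; rewrite qx; split => //; left.
apply: run_fork1 qf'_final dV (liso_refl V).
by split => //; exists d; split => //; rewrite expr_middle qx; split => //; right.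
Qed.

Lemma entry_complete_par y z :
  entry_complete y -> entry_complete z -> entry_complete (srpar y z).
Proof.
move=> IHy IHz W [U [V [yU zV WUV]]] q qx q0.
have /entry_child[c [cy c0]] : is_child y (expr q) by rewrite qx; left.
have /entry_child[d [dz d0]] : is_child z (expr q) by rewrite qx; right.
have [qf [qf_final cU]] := IHy U yU c cy c0.
have [qf' [qf'_final dV]] := IHz V zV d dz d0.
exists (exit q); split; first by rewrite /= /final expr_exit qx.
apply: run_fork2 qf_final qf'_final cU dV WUV.
by split => //; exists c; split => //; rewrite qx; exists d.
Qed.

Lemma entry_complete_star y : entry_complete y -> entry_complete (srstar y).
Proof.
move=> IHy W [n yW] q qx q0.
have /entry_child[c [cy c0]] : is_child y (expr q) by rewrite qx.
exists q; split; first by rewrite /= /final qx.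
elim: n W yW => [|n IHn] W /=; first exact: run_one.
case=> U [V [yU yV WUV]].
apply: (run_seq _ (IHn V yV) WUV).
have [qf [qf_final cU]] := IHy U yU c cy c0.
apply: run_fork1 qf_final cU (liso_refl U).
by split => //; exists c; split => //; rewrite qx.
Qed.

Lemma entry_complete_all x : entry_complete x.
Proof.
elim: x => [U []| |a|y IHy z IHz|y IHy z IHz|y IHy z IHz|y IHy].
- exact: entry_complete_one.
- exact: entry_complete_lit.
- exact: entry_complete_plus.
- exact: entry_complete_seq.
- exact: entry_complete_par.
- exact: entry_complete_star.
Qed.

Lemma subterms_gt0 : 0 < size (subterms e).
Proof. by case: e. Qed.

Definition start : state := (Ordinal subterms_gt0, ord0).

Lemma expr_start : expr start = e.
Proof. by rewrite /expr /=; case: e. Qed.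

Lemma aut_lang (U : lpo) : pa_lang aut start U <-> sem e U.
Proof.
split; last by move=> eU; apply: entry_complete_all eU _ expr_start _.
case=> qf [qf_final /run_sound [/expr_block qf_start startU]].
by rewrite -expr_start -qf_start; apply: final_sem; rewrite // qf_start.
Qed.

End Construction.

Theorem theorem7p16 (Sigma : finType) (e : srexpr Sigma) :
  exists (Q : finType) (A : pa Sigma Q) (q : Q),
    fork_acyclic A /\
    (forall U : lpo Sigma, is_lposet U -> (pa_lang A q U <-> sem e U)).
Proof.
exists (state e), (aut e), (start e); split; first exact: aut_fork_acyclic.
by move=> U _; apply: aut_lang.
Qed.
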